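(* For every $c\geq1$ let $L_c=(1,1,c)$. Then for every $n>2$, $\lim_{c\to\infty}\rho_{n,L_c}=\frac{n-2}{n}$.
   Context: Let $X$ be a finite alphabet with $n\geq 2$ letters and $X^*$ the set of words over $X$; $|v|$ is the length of a word $v$. A code over $X$ is a finite sequence $C=(v_1,\ldots,v_m)$ of words over $X$ such that every $w\in X^*$ has at most one factorization into code-words: if $w=v_{i_1}\cdots v_{i_l}=v_{j_1}\cdots v_{j_{l'}}$ with $l,l'\geq1$, then $l=l'$ and $i_t=j_t$ for all $t$. (Codes are sequences, not sets.) A code $C=(v_1,\ldots,v_m)$ is a prefix code if for all $i,j$, $v_i$ is a prefix of $v_j$ if and only if $i=j$. For a finite sequence $L=(a_1,\ldots,a_m)$ of positive integers, $UD_n(L)$ is the set of all codes $(v_1,\ldots,v_m)$ over an $n$-letter alphabet with $|v_i|=a_i$ for all $i$, $PR_n(L)\subseteq UD_n(L)$ is the subset of prefix codes, and $\rho_{n,L}=|PR_n(L)|/|UD_n(L)|$ (defined when $UD_n(L)\ne\emptyset$). *)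

From HB Require Import structures.
From mathcomp Require Import all_boot all_order all_algebra.
From mathcomp Require Import all_classical all_reals all_analysis.
Set Implicit Arguments. Unset Strict Implicit. Unset Printing Implicit Defensive.
Import Order.TTheory GRing.Theory Num.Theory.

Definition is_code (n : nat) (C : seq (seq 'I_n)) : Prop :=
  forall ix jx : seq nat,
    all (fun i => i < size C) ix -> all (fun j => j < size C) jx ->
    ix != [::] -> jx != [::] ->
    flatten [seq nth [::] C i | i <- ix] = flatten [seq nth [::] C j | j <- jx] ->
    ix = jx.

Definition is_prefix_code (n : nat) (C : seq (seq 'I_n)) : Prop :=
  is_code C /\
  forall i j, i < size C -> j < size C ->
    (prefix (nth [::] C i) (nth [::] C j) <-> i = j).

Definition words_of_len (n k : nat) : seq (seq 'I_n) :=
  [seq val t | t <- enum {: k.-tuple 'I_n}].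

Fixpoint candidates (n : nat) (L : seq nat) : seq (seq (seq 'I_n)) :=
  match L with
  | [::] => [:: [::]]
  | a :: L' => [seq v :: C | v <- words_of_len n a, C <- candidates n L']
  end.

Definition card_UD (n : nat) (L : seq nat) : nat :=
  count (fun C => `[< is_code C >]) (candidates n L).
Definition card_PR (n : nat) (L : seq nat) : nat :=
  count (fun C => `[< is_prefix_code C >]) (candidates n L).

Definition rho (R : realType) (n : nat) (L : seq nat) : R :=
  ((card_PR n L)%:R / (card_UD n L)%:R)%R.

From HB Require Import structures.
From mathcomp Require Import all_boot all_order all_algebra.
From mathcomp Require Import all_classical all_reals all_analysis.
From mathcomp Require Import ring.
Import Order.TTheory GRing.Theory Num.Theory numFieldNormedType.Exports.
Set Implicit Arguments. Unset Strict Implicit. Unset Printing Implicit Defensive.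

(* A candidate for L = (1,1,k) is a triple C = ([x], [y], w) with |w| = k >= 1.
   1. Characterisation.  C is uniquely decipherable iff x <> y and w is not a
      word over {x, y}: otherwise w is also a concatenation of [x]'s and [y]'s;
      conversely the first letter outside {x, y} of a concatenation locates the
      first occurrence of w, which makes the parse unique.  C is a prefix code
      iff x <> y and the first letter of w lies outside {x, y}.
   2. Counting.  Hence |UD_n(1,1,k+1)| = n(n-1)(n^(k+1) - 2^(k+1)) and
      |PR_n(1,1,k+1)| = n(n-1)(n-2)n^k, so that
      rho = ((n-2)/n) / (1 - (2/n)^(k+1)).
   3. Limit. *)

Definition in_pair {n : nat} (a b x : 'I_n) : bool := (x == a) || (x == b).

Definition starts_outside {n : nat} (a b : 'I_n) (w : seq 'I_n) : bool :=
  if w is x :: _ then ~~ in_pair a b x else false.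

Definition code3 {n : nat} (a b : 'I_n) (w : seq 'I_n) : seq (seq 'I_n) :=
  [:: [:: a]; [:: b]; w].

Lemma repeated_letter_not_code n (a : 'I_n) (w : seq 'I_n) : ~ is_code (code3 a a w).
Proof. by move=> code_aa; have := code_aa [:: 0%N] [:: 1%N] isT isT isT isT erefl. Qed.

Section ThreeWordCode.
Variables (n : nat) (a b : 'I_n) (w : seq 'I_n).
Hypothesis neq_ab : a != b.
Local Notation q := (in_pair a b).
Local Notation C := (code3 a b w).

Let parse (ix : seq nat) : seq 'I_n := flatten [seq nth [::] C i | i <- ix].

Lemma parse_cons i ix : parse (i :: ix) = nth [::] C i ++ parse ix.
Proof. by []. Qed.

(* If w contains a letter outside {a, b}, the first such letter of parse ix
   sits inside the first copy of w, or there is none if w is not used. *)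
Lemma first_outside_parse ix : all (fun i => i < 3)%N ix -> ~~ all q w ->
  if 2%N \in ix then find (predC q) (parse ix) = (index 2 ix + find (predC q) w)%N
  else all q (parse ix).
Proof.
move=> Hix Hw; elim: ix Hix => [|i ix IH] //= /andP[Hi Hix].
rewrite parse_cons in_cons find_cat all_cat.
have hw : has (predC q) w by rewrite has_predC.
case: i Hi => [|[|[|i]]] //= _; last by rewrite hw.
all: rewrite /in_pair eqxx ?orbT /=; move: (IH Hix).
all: by case: (2%N \in ix) => //= ->; rewrite add1n.
Qed.

(* A parse starting with a one-letter word never equals one starting with w:
   their first letters outside {a, b} occur at different positions. *)
Lemma parse_letter_neq_parse_w i ix jx : (i < 2)%N ->
  all (fun i => i < 3)%N ix -> ~~ all q w -> parse (i :: ix) <> parse (2%N :: jx).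
Proof.
move=> Hi Hix Hw.
have Ei : nth [::] C i = [:: nth a [:: a; b] i] by case: i Hi => [|[|i]].
have qi : q (nth a [:: a; b] i).
  by case: i Hi {Ei} => [|[|i]] //= _; rewrite /in_pair eqxx ?orbT.
have hw : has (predC q) w by rewrite has_predC.
move=> E.
have find_w : find (predC q) (parse (i :: ix)) = find (predC q) w.
  by rewrite E parse_cons find_cat hw.
have not_all : ~~ all q (parse (i :: ix)).
  by rewrite E parse_cons all_cat negb_and Hw.
rewrite parse_cons Ei /= qi /= in find_w not_all.
move: (first_outside_parse Hix Hw).
case: (2%N \in ix) => [|all_q]; last by rewrite all_q in not_all.
move=> find_ix; move: find_w; rewrite find_ix -addSn => /eqP.
by rewrite -{2}[find _ w]add0n eqn_add2r.
Qed.

Lemma parse_inj ix jx : ~~ all q w ->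
  all (fun i => i < 3)%N ix -> all (fun j => j < 3)%N jx ->
  parse ix = parse jx -> ix = jx.
Proof.
move=> Hw.
have parse_ne i ix' : (i < 3)%N -> parse (i :: ix') != [::].
  by rewrite parse_cons; case: i => [|[|[|i]]] //= _; case: (w) Hw.
elim: ix jx => [|i ix IH] [|j jx] //=.
- by move=> _ /andP[Hj _] E; move: (parse_ne j jx Hj); rewrite -E.
- by move=> /andP[Hi _] _ E; move: (parse_ne i ix Hi); rewrite E.
move=> /andP[Hi Hix] /andP[Hj Hjx].
have mixed := parse_letter_neq_parse_w.
case: i Hi => [|[|[|i]]] //= _; case: j Hj => [|[|[|j]]] //= _.
all: rewrite ?parse_cons /=.
- by case=> /IH ->.
- by case=> E; move: neq_ab; rewrite E eqxx.
- by move=> E; case: (mixed 0%N ix jx).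
- by case=> E; move: neq_ab; rewrite E eqxx.
- by case=> /IH ->.
- by move=> E; case: (mixed 1%N ix jx).
- by move=> E; case: (mixed 0%N jx ix).
- by move=> E; case: (mixed 1%N jx ix).
- by move/(congr1 (drop (size w))); rewrite !drop_size_cat // => /IH ->.
Qed.

Lemma parse_letters s : all q s -> parse [seq (if x == a then 0 else 1)%N | x <- s] = s.
Proof.
elim: s => [|x s IH] //= /andP[qx Hs]; rewrite parse_cons IH //.
by case: ifP => [/eqP -> //|/negbT xa]; move: qx; rewrite /in_pair (negbTE xa) => /eqP ->.
Qed.

Lemma code3_iff : w != [::] -> is_code C <-> ~~ all q w.
Proof.
move=> wne; split=> [code_C|Hw ix jx Hix Hjx _ _]; last exact: parse_inj.
apply/negP => all_q.
set jx := [seq (if x == a then 0 else 1)%N | x <- w].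
have jx_lt : all (fun j => j < 3)%N jx by apply/allP => j /mapP[x _ ->]; case: ifP.
have jx_ne : jx != [::] by rewrite /jx; case: (w) wne.
have := code_C [:: 2%N] jx isT jx_lt isT jx_ne.
rewrite /= cats0 -[X in X = _ -> _]parse_letters // => /(_ erefl) E.
have : 2%N \in jx by rewrite -E mem_head.
by case/mapP=> x _; case: ifP.
Qed.

Lemma prefix_code3_iff : is_prefix_code C <-> starts_outside a b w.
Proof.
split=> [[_ pref_C]|].
  case Ew: w => [|x t].
    by have [+ _] := pref_C 2%N 0%N isT isT; rewrite /= Ew => /(_ isT).
  rewrite /= /in_pair negb_or; apply/andP; split; apply/negP => /eqP Ex.
    have [+ _] := pref_C 0%N 2%N isT isT.
    by rewrite /= Ew Ex prefix_cons eqxx prefix0s => /(_ isT).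
  have [+ _] := pref_C 1%N 2%N isT isT.
  by rewrite /= Ew Ex prefix_cons eqxx prefix0s => /(_ isT).
case Ew: w => [|x t] //=; rewrite /in_pair negb_or => /andP[xa xb].
have wne : w != [::] by rewrite Ew.
rewrite -Ew; split.
  by apply/(code3_iff wne); rewrite Ew /= /in_pair (negbTE xa) (negbTE xb).
move=> i j Hi Hj; split=> [|<-]; last exact: prefix_refl.
case: i j Hi Hj => [|[|[|i]]] [|[|[|j]]] //= _ _; rewrite ?Ew /= ?prefix_cons //.
all: by rewrite ?(eq_sym a) ?(eq_sym b) ?(negbTE xa) ?(negbTE xb) ?(negbTE neq_ab).
Qed.
End ThreeWordCode.

Lemma count_enum_card (T : finType) (p : pred T) : count p (enum T) = #|p|.
Proof. by rewrite cardE size_filter enumT. Qed.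

Lemma card_in_pair n (x y : 'I_n) : x != y -> #|in_pair x y| = 2.
Proof. by move=> xy; rewrite (eq_card (B := pred2 x y)) // card2 xy. Qed.

Lemma card_out_pair n (x y : 'I_n) : x != y -> #|(fun z => ~~ in_pair x y z)| = n.-2.
Proof.
move=> xy; have := cardC (in_pair x y).
rewrite card_in_pair // card_ord => total.
by rewrite -[in RHS]total add2n; apply: eq_card.
Qed.

Lemma card_neq n (x : 'I_n) : #|(fun y => x != y)| = n.-1.
Proof.
by rewrite (eq_card (B := predC1 x)) ?cardC1 ?card_ord // => y; rewrite !inE eq_sym.
Qed.

Lemma sumn_count_mul (T : Type) (s : seq T) (p : pred T) c :
  sumn [seq (p x : nat) * c | x <- s] = count p s * c.
Proof. by elim: s => [|x s IH] //=; rewrite IH mulnDl. Qed.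

Section Words.
Variable n : nat.

Lemma mem_words k t : (t \in words_of_len n k) = (size t == k).
Proof.
apply/mapP/eqP => [[u _ ->]|Ht]; first exact: size_tuple.
by exists (Tuple (introT eqP Ht)); rewrite ?mem_enum.
Qed.

Lemma uniq_words k : uniq (words_of_len n k).
Proof. by rewrite map_inj_uniq ?enum_uniq //; exact: val_inj. Qed.

Lemma size_words k : size (words_of_len n k) = n ^ k.
Proof. by rewrite size_map -cardE card_tuple card_ord. Qed.

Lemma words0 : words_of_len n 0 = [:: [::]].
Proof.
apply: perm_small_eq => //; apply: uniq_perm; rewrite ?uniq_words // => t.
by rewrite mem_words inE size_eq0.
Qed.

Lemma words_succ_perm k : perm_eq (words_of_len n k.+1)
  [seq x :: t | x <- enum 'I_n, t <- words_of_len n k].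
Proof.
apply: uniq_perm; first exact: uniq_words.
  apply: allpairs_uniq; [exact: enum_uniq | exact: uniq_words |].
  by move=> [x1 t1] [x2 t2] _ _ /= [-> ->].
move=> t; rewrite mem_words; apply/eqP/allpairsP => [|[[x u] [_ /= + ->]]].
  by case: t => [|x u] //= [Hu]; exists (x, u); rewrite mem_enum mem_words Hu.
by rewrite mem_words /= => /eqP ->.
Qed.

Lemma count_words_succ k (P : pred (seq 'I_n)) : count P (words_of_len n k.+1) =
  sumn [seq count (fun t => P (x :: t)) (words_of_len n k) | x <- enum 'I_n].
Proof.
rewrite (permP (words_succ_perm k)) count_flatten -map_comp.
by congr sumn; apply: eq_map => x /=; rewrite count_map.
Qed.

Lemma count_all_words (q : pred 'I_n) k :
  count (all q) (words_of_len n k) = #|q| ^ k.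
Proof.
elim: k => [|k IH]; first by rewrite words0.
rewrite count_words_succ expnS -IH -count_enum_card -sumn_count_mul.
congr sumn; apply: eq_map => x /=.
by case: (q x); rewrite ?mul1n // mul0n count_pred0.
Qed.

Lemma count_head_words (p : pred 'I_n) k :
  count (fun w => if w is x :: _ then p x else false) (words_of_len n k.+1) =
  #|p| * n ^ k.
Proof.
rewrite count_words_succ -count_enum_card -sumn_count_mul.
congr sumn; apply: eq_map => x /=.
rewrite -(size_words k) -count_predT.
by case: (p x); rewrite ?mul1n // mul0n count_pred0.
Qed.
End Words.

Section Candidates.
Variable n : nat.

Lemma count_candidates_cons m L (P : pred (seq (seq 'I_n))) :
  count P (candidates n (m :: L)) =
  sumn [seq count (fun C => P (v :: C)) (candidates n L) | v <- words_of_len n m].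
Proof.
rewrite /= count_flatten -map_comp.
by congr sumn; apply: eq_map => v /=; rewrite count_map.
Qed.

Lemma count_candidates_single m (P : pred (seq (seq 'I_n))) :
  count P (candidates n [:: m]) = count (fun v => P [:: v]) (words_of_len n m).
Proof.
rewrite count_candidates_cons -sumn_count.
by congr sumn; apply: eq_map => v /=; rewrite addn0.
Qed.

Lemma sumn_words1 (F : seq 'I_n -> nat) :
  sumn [seq F v | v <- words_of_len n 1] = sumn [seq F [:: x] | x <- enum 'I_n].
Proof.
rewrite (perm_sumn (perm_map F (words_succ_perm n 0))) words0.
by elim: (enum 'I_n) => [|x s IH] //=; rewrite IH.
Qed.

Lemma count_triples k (P : pred (seq (seq 'I_n))) c :
  (forall x w, ~~ P (code3 x x w)) ->
  (forall x y, x != y -> count (fun w => P (code3 x y w)) (words_of_len n k) = c) ->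
  count P (candidates n [:: 1; 1; k]%N) = n * (n.-1 * c).
Proof.
move=> P_xx P_xy.
have pair_count x y :
    count (fun w => P (code3 x y w)) (words_of_len n k) = (x != y) * c.
  have [<-|/P_xy -> //] := eqVneq x y; last by rewrite mul1n.
  by rewrite mul0n (eq_count (a2 := pred0)) ?count_pred0 // => w; apply/negbTE.
rewrite count_candidates_cons sumn_words1 -[n in n * _]card_ord -count_enum_card.
rewrite -sumn_count_mul; congr sumn; apply: eq_map => x; rewrite mul1n.
rewrite count_candidates_cons sumn_words1 -(card_neq x) -count_enum_card.
rewrite -sumn_count_mul; congr sumn; apply: eq_map => y.
by rewrite count_candidates_single pair_count.
Qed.
End Candidates.

Lemma card_UD_eq n k :
  card_UD n [:: 1; 1; k.+1] = n * (n.-1 * (n ^ k.+1 - 2 ^ k.+1)).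
Proof.
apply: count_triples => [x w|x y xy].
  by apply/negP => /asboolP; apply: repeated_letter_not_code.
rewrite (@eq_in_count _ _ (predC (all (in_pair x y)))); last first.
  move=> w; rewrite mem_words => /eqP size_w.
  have w_ne : w != [::] by rewrite -size_eq0 size_w.
  by apply/asboolP/idP => /(code3_iff xy w_ne).
have := count_predC (all (in_pair x y)) (words_of_len n k.+1).
by rewrite size_words count_all_words card_in_pair // => <-; rewrite addKn.
Qed.

Lemma card_PR_eq n k :
  card_PR n [:: 1; 1; k.+1] = n * (n.-1 * (n.-2 * n ^ k)).
Proof.
apply: count_triples => [x w|x y xy].
  by apply/negP => /asboolP [/repeated_letter_not_code].
rewrite (@eq_count _ _ (starts_outside x y)); last first.
  by move=> w; apply/asboolP/idP => /(prefix_code3_iff w xy).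
by rewrite count_head_words card_out_pair.
Qed.

Local Open Scope ring_scope.

(* Closed form of rho_{n,(1,1,c+1)}: dividing numerator and denominator by
   n(n-1) n^(c+1) gives ((n-2)/n) / (1 - (2/n)^(c+1)). *)
Lemma rho_eq (R : realType) (n c : nat) : (2 < n)%N ->
  rho R n [:: 1%N; 1%N; c.+1] = ((n%:R - 2) / n%:R) / (1 - (2 / n%:R) ^+ c.+1).
Proof.
move=> n_gt2; rewrite /rho card_UD_eq card_PR_eq.
have pow_le : (2 ^ c.+1 <= n ^ c.+1)%N by rewrite leq_exp2r // ltnW.
have pred2_nat : n.-2%:R = n%:R - 2 :> R by rewrite -subn2 natrB // ltnW.
have pred1_nat : n.-1%:R = n%:R - 1 :> R by rewrite -subn1 natrB // ltnW // ltnW.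
rewrite !natrM natrB // !natrX pred2_nat pred1_nat.
set N := n%:R; have N_neq0 : N != 0 by rewrite pnatr_eq0 gtn_eqF // ltnW // ltnW.
have N1_neq0 : N - 1 != 0 by rewrite subr_eq0 pnatr_eq1 gtn_eqF // ltnW.
have diff_neq0 : N ^+ c.+1 - 2 ^+ c.+1 != 0.
  by rewrite subr_eq0 -[2]/(2%:R : R) -!natrX eqr_nat gtn_eqF // ltn_exp2r.
rewrite expr_div_n exprS; field.
by rewrite -exprS diff_neq0 N_neq0 N1_neq0 expf_neq0.
Qed.

Local Open Scope classical_set_scope.

Lemma cvg_div_one_sub_expr (R : realType) (K r : R) : `|r| < 1 ->
  (fun c : nat => K / (1 - r ^+ c.+1)) @ \oo --> K.
Proof.
move=> r_lt1.
have pow_cvg0 : (fun c => r ^+ c.+1) @ \oo --> 0.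
  by have := cvg_expr r_lt1; rewrite -cvg_shiftS.
rewrite -[X in _ --> X]mulr1 -[X in _ * X]invr1 -[X in _ * X^-1](subr0 1).
apply: cvgM; first exact: cvg_cst.
apply: cvgV; first by rewrite subr0 oner_neq0.
by apply: cvgB; first exact: cvg_cst.
Qed.

Theorem theorem5 (R : realType) (n : nat) :
  (2 < n)%N ->
  (fun c : nat => rho R n [:: 1%N; 1%N; c.+1]) @ \oo --> ((n%:R - 2) / n%:R : R).
Proof.
move=> n_gt2.
rewrite (funext (fun c => rho_eq R c n_gt2)).
apply: cvg_div_one_sub_expr.
have n_pos : (0 : R) < n%:R by rewrite ltr0n ltnW // ltnW.
rewrite ger0_norm ?divr_ge0 ?ler0n // ltr_pdivrMr // mul1r.
by rewrite -[2]/(2%:R : R) ltr_nat.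
Qed.
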